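(* Let $\sum_{n=1}^{\infty}x_n$ be a divergent series of positive real terms with $\lim_{n\to\infty}x_n=0$, and let $S=\{\sum_{n=1}^{\infty}(x_n-x_{\sigma(n)}) : \sigma\in S_\infty,\ \text{the series converges}\}$. If $b\in S$, then $[b,\infty)\subseteq S$.
   Context: $S_\infty$ denotes the set of all permutations of $\mathbb{N}$. *)

(* classical reals. Sequences are indexed from 0 (x 0 is x_1). *)
From Stdlib Require Import Reals.
Open Scope R_scope.

Definition is_perm (sigma : nat -> nat) : Prop :=
  (forall m n, sigma m = sigma n -> m = n) /\ (forall k, exists n, sigma n = k).

Definition rearr_diff_sums (x : nat -> R) (b : R) : Prop :=
  exists sigma : nat -> nat, is_perm sigma /\
    infinite_sum (fun n => x n - x (sigma n)) b.

(* Put [y n = x (sigma n)]: then [y] is positive, tends to 0 and is not summable, and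
   sum (x n - x (sigma (rho n))) = sum (x n - y n) + sum (y n - y (rho n)).  So it suffices to
   find, for [d = c - b >= 0], an involution [rho] with sum (y n - y (rho n)) = d.
   [rho] swaps disjoint pairs (i, partner i); the n-th partial sum is then the sum of
   y i - y (partner i) over the pairs still open at n (i <= n < partner i).  Indices are
   opened greedily while the open mass is below [d].  The partners are fixed in advance,
   increasing, with [y (partner i) <= 2^-i], so the tail over open partners vanishes, and with
   [y]-mass at least [d] between consecutive partners, so the greedy rule refills the open mass
   to [d] before the next pair closes.  Hence the open mass tends to [d]. *)

From Stdlib Require Import Reals Lra Lia List Classical ClassicalEpsilon.
Open Scope R_scope.
Open Scope bool_scope.

Lemma sum_f_R0_single (f : nat -> R) (n k : nat) :
  (k <= n)%nat -> (forall i, (i <= n)%nat -> i <> k -> f i = 0) ->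
  sum_f_R0 f n = f k.
Proof.
  intros hk hzero. induction n as [|n IH].
  - now replace k with 0%nat by lia.
  - rewrite tech5. destruct (Nat.eq_dec k (S n)) as [->|hne].
    + rewrite (sum_eq_R0 f n) by (intros i hi; apply hzero; lia). ring.
    + rewrite IH, (hzero (S n)) by (lia || (intros; apply hzero; lia)). ring.
Qed.

Lemma sum_f_R0_le_mono (a : nat -> R) (m n : nat) :
  (forall k, 0 <= a k) -> (m <= n)%nat -> sum_f_R0 a m <= sum_f_R0 a n.
Proof.
  intros ha. induction 1 as [|n _ IH]; [lra|]. rewrite tech5. specialize (ha (S n)). lra.
Qed.

Lemma sum_pow_half_from (K m : nat) :
  sum_f_R0 (fun i => if (K <=? i)%nat then (/2) ^ i else 0) m <= 2 * (/2) ^ K.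
Proof.
  assert (telescope : sum_f_R0 (fun i => if (K <=? i)%nat then (/2) ^ i else 0) m
                      <= 2 * (/2) ^ K - 2 * (/2) ^ Nat.max K (S m)).
  { induction m as [|m IH].
    - simpl. destruct (Nat.leb_spec K 0) as [hK|hK].
      + replace K with 0%nat by lia. simpl. lra.
      + rewrite Nat.max_l by lia. lra.
    - rewrite tech5. destruct (Nat.leb_spec K (S m)) as [hK|hK].
      + rewrite Nat.max_r in IH by lia. rewrite Nat.max_r by lia.
        change ((/2) ^ S (S m)) with (/2 * (/2) ^ S m). lra.
      + rewrite Nat.max_l in IH by lia. rewrite Nat.max_l by lia. lra. }
  pose proof (pow_le (/2) (Nat.max K (S m)) ltac:(lra)). lra.
Qed.

Lemma infinite_sum_ext (a b : nat -> R) (l : R) :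
  (forall n, a n = b n) -> infinite_sum a l -> infinite_sum b l.
Proof.
  intros hab ha. change (Un_cv (sum_f_R0 b) l).
  apply (Un_cv_ext (sum_f_R0 a)); [intros n; apply sum_eq; auto | exact ha].
Qed.

Lemma infinite_sum_plus (a b : nat -> R) (la lb : R) :
  infinite_sum a la -> infinite_sum b lb -> infinite_sum (fun n => a n + b n) (la + lb).
Proof.
  intros ha hb. change (Un_cv (sum_f_R0 (fun n => a n + b n)) (la + lb)).
  apply (Un_cv_ext (fun n => sum_f_R0 a n + sum_f_R0 b n)); [intros n; now rewrite sum_plus|].
  exact (CV_plus _ _ _ _ ha hb).
Qed.

Lemma infinite_sum_terms_cv0 (a : nat -> R) (l : R) : infinite_sum a l -> Un_cv a 0.
Proof.
  intros hsum eps heps. destruct (hsum (eps / 2) ltac:(lra)) as [N hN]. exists (S N).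
  intros [|n] hn; [lia|].
  pose proof (hN (S n) ltac:(lia)) as h1. pose proof (hN n ltac:(lia)) as h2.
  unfold Rdist in *. rewrite tech5 in h1. rewrite Rminus_0_r.
  apply Rabs_def2 in h1, h2. apply Rabs_def1; lra.
Qed.

Lemma partial_sums_unbounded (a : nat -> R) :
  (forall n, 0 <= a n) -> ~ (exists l, infinite_sum a l) ->
  forall B, exists k, B < sum_f_R0 a k.
Proof.
  intros ha hdiv B. apply NNPP. intros hbounded. apply hdiv.
  destruct (growing_cv (sum_f_R0 a)) as [l hl].
  - intros n. rewrite tech5. specialize (ha (S n)). lra.
  - exists B. intros r [k ->]. apply Rnot_lt_le. intros hk. apply hbounded. now exists k.
  - now exists l.
Qed.

Lemma involutive_is_perm (rho : nat -> nat) : (forall n, rho (rho n) = n) -> is_perm rho.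
Proof.
  intros hrho. split.
  - intros m n e. now rewrite <- (hrho m), e, hrho.
  - intros k. now exists (rho k).
Qed.

Lemma is_perm_comp (s t : nat -> nat) : is_perm s -> is_perm t -> is_perm (fun n => s (t n)).
Proof.
  intros [s_inj s_surj] [t_inj t_surj]. split.
  - intros m n e. now apply t_inj, s_inj.
  - intros k. destruct (s_surj k) as [m <-]. destruct (t_surj m) as [n <-]. now exists n.
Qed.

Lemma find_ext_in {A : Type} (f g : A -> bool) (l : list A) :
  (forall a, In a l -> f a = g a) -> find f l = find g l.
Proof.
  induction l as [|a l IH]; intros hfg; simpl; [reflexivity|].
  rewrite (hfg a (or_introl eq_refl)), IH by (intros; apply hfg; now right). reflexivity.
Qed.

Section Involution.

Variables (y : nat -> R) (d : R).
Hypothesis y_pos : forall n, 0 < y n.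
Hypothesis y_cv0 : Un_cv y 0.
Hypothesis y_unbounded : forall B, exists k, B < sum_f_R0 y k.
Hypothesis d_nonneg : 0 <= d.

Lemma exists_far_index (L i : nat) :
  exists j, (S L < j)%nat /\ d <= sum_f_R0 y (pred j) - sum_f_R0 y L /\ y j <= (/2) ^ i.
Proof.
  destruct (y_unbounded (sum_f_R0 y L + d)) as [k hk].
  destruct (y_cv0 ((/2) ^ i) ltac:(apply pow_lt; lra)) as [K hK].
  set (j := S (Nat.max (Nat.max k K) (S L))).
  exists j. repeat split.
  - unfold j. lia.
  - pose proof (sum_f_R0_le_mono y k (pred j) (fun n => Rlt_le _ _ (y_pos n))
                  ltac:(unfold j; lia)).
    lra.
  - specialize (hK j ltac:(unfold j; lia)). unfold Rdist in hK.
    rewrite Rminus_0_r in hK. apply Rabs_def2 in hK. lra.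
Qed.

Definition far_index (L i : nat) : nat :=
  proj1_sig (constructive_indefinite_description _ (exists_far_index L i)).

Lemma far_index_spec (L i : nat) :
  (S L < far_index L i)%nat /\
  d <= sum_f_R0 y (pred (far_index L i)) - sum_f_R0 y L /\ y (far_index L i) <= (/2) ^ i.
Proof. exact (proj2_sig (constructive_indefinite_description _ (exists_far_index L i))). Qed.

Fixpoint partner (i : nat) : nat :=
  match i with
  | O => far_index 0 0
  | S i' => far_index (partner i') (S i')
  end.

Lemma partner_succ (i : nat) : (S (partner i) < partner (S i))%nat.
Proof. exact (proj1 (far_index_spec (partner i) (S i))). Qed.

Lemma partner_gap (k : nat) :
  d <= sum_f_R0 y (pred (partner (S k))) - sum_f_R0 y (partner k).
Proof. exact (proj1 (proj2 (far_index_spec (partner k) (S k)))). Qed.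

Lemma partner_small (i : nat) : y (partner i) <= (/2) ^ i.
Proof. destruct i; exact (proj2 (proj2 (far_index_spec _ _))). Qed.

Lemma partner_gt (i : nat) : (i < partner i)%nat.
Proof.
  induction i as [|i IH].
  - pose proof (proj1 (far_index_spec 0 0)). simpl. lia.
  - pose proof (partner_succ i). lia.
Qed.

Lemma partner_lt_iff (i j : nat) : (partner i < partner j)%nat <-> (i < j)%nat.
Proof.
  assert (mono : forall i j, (i < j)%nat -> (partner i < partner j)%nat).
  { intros i' j' hij. induction hij as [|j' _ IH]; pose proof (partner_succ i');
      [|pose proof (partner_succ j')]; lia. }
  split; [|apply mono]. intros h.
  destruct (Nat.lt_ge_cases i j) as [|hji]; [assumption|].
  destruct (Nat.eq_dec i j) as [->|hne]; [lia|]. specialize (mono j i ltac:(lia)). lia.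
Qed.

Lemma partner_inj (i j : nat) : partner i = partner j -> i = j.
Proof.
  intros e. destruct (Nat.lt_total i j) as [h|[h|h]]; [| exact h |];
    apply partner_lt_iff in h; lia.
Qed.

Definition open_sum (sel : nat -> bool) (f : nat -> R) (m : nat) : R :=
  sum_f_R0 (fun i => if sel i && (m <? partner i)%nat then f i else 0) m.

Definition closer_in (sel : nat -> bool) (m : nat) : option nat :=
  find (fun i => sel i && (partner i =? m)%nat) (seq 0 m).

Definition opens_at (sel : nat -> bool) (m : nat) : bool :=
  match closer_in sel m with
  | Some _ => false
  | None => if Rlt_dec (open_sum sel y m) d then true else false
  end.

Fixpoint opened_below (n : nat) : nat -> bool :=
  match n with
  | O => fun _ => false
  | S m => fun i => if (i =? m)%nat then opens_at (opened_below m) m else opened_below m i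
  end.

Definition opened (m : nat) : bool := opened_below (S m) m.

Definition closer : nat -> option nat := closer_in opened.

Definition pending (m : nat) : R := open_sum (opened_below m) y m.

Definition mass : nat -> R := open_sum opened y.

Definition tail : nat -> R := open_sum opened (fun i => y (partner i)).

Lemma opened_below_spec (n i : nat) : opened_below n i = (i <? n)%nat && opened i.
Proof.
  induction n as [|n IH]; [reflexivity|]. simpl.
  destruct (Nat.eqb_spec i n) as [->|hne].
  - rewrite (proj2 (Nat.ltb_lt n (S n))) by lia. unfold opened. simpl. now rewrite Nat.eqb_refl.
  - rewrite IH. destruct (Nat.ltb_spec i n), (Nat.ltb_spec i (S n)); try reflexivity; lia.
Qed.

Lemma opened_eq (m : nat) :
  opened m = match closer m with
             | Some _ => false
             | None => if Rlt_dec (pending m) d then true else false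
             end.
Proof.
  unfold opened at 1. simpl. rewrite Nat.eqb_refl. unfold opens_at, closer, closer_in.
  rewrite (find_ext_in _ (fun i => opened i && (partner i =? m)%nat)); [reflexivity|].
  intros i hi. apply in_seq in hi. rewrite opened_below_spec.
  now rewrite (proj2 (Nat.ltb_lt i m)) by lia.
Qed.

Lemma closer_Some (m i : nat) : closer m = Some i -> opened i = true /\ partner i = m.
Proof.
  intros hc. apply find_some in hc as [_ hi].
  apply andb_prop in hi as [hi he]. now apply Nat.eqb_eq in he.
Qed.

Lemma closer_None (m i : nat) : closer m = None -> opened i = true -> partner i <> m.
Proof.
  intros hc hi he. destruct (Nat.lt_ge_cases i m) as [him|hmi].
  - apply find_none with (x := i) in hc; [|apply in_seq; lia].
    rewrite hi, he, Nat.eqb_refl in hc. discriminate.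
  - pose proof (partner_gt i). lia.
Qed.

Lemma closer_partner (i : nat) : opened i = true -> closer (partner i) = Some i.
Proof.
  intros hi. destruct (closer (partner i)) as [j|] eqn:hc.
  - destruct (closer_Some _ _ hc) as [_ he].
    f_equal. now apply partner_inj.
  - now destruct (closer_None _ _ hc hi).
Qed.

Lemma opened_closer (m : nat) : opened m = true -> closer m = None.
Proof. rewrite opened_eq. now destruct (closer m). Qed.

Definition closing_term (f : nat -> R) (m : nat) : R :=
  match closer m with Some i => f i | None => 0 end.

Lemma closing_term_sum (f : nat -> R) (n : nat) :
  sum_f_R0 (fun i => if opened i && (partner i =? S n)%nat then f i else 0) n =
  closing_term f (S n).
Proof.
  unfold closing_term. destruct (closer (S n)) as [i|] eqn:hc.
  - destruct (closer_Some _ _ hc) as [hi he]. pose proof (partner_gt i).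
    rewrite (sum_f_R0_single _ n i) by
      (lia || (intros j _ hji; destruct (opened j) eqn:hj, (Nat.eqb_spec (partner j) (S n));
               try reflexivity; destruct hji; apply partner_inj; congruence)).
    now rewrite hi, he, Nat.eqb_refl.
  - apply sum_eq_R0. intros j _. destruct (opened j) eqn:hj; [|reflexivity].
    destruct (Nat.eqb_spec (partner j) (S n)) as [he|]; [|reflexivity].
    now destruct (closer_None _ _ hc hj).
Qed.

Lemma open_sum_succ (f : nat -> R) (n : nat) :
  open_sum opened f (S n) =
  open_sum opened f n - closing_term f (S n) + (if opened (S n) then f (S n) else 0).
Proof.
  unfold open_sum. rewrite tech5, <- closing_term_sum.
  rewrite (proj2 (Nat.ltb_lt _ _) (partner_gt (S n))), Bool.andb_true_r.
  enough (split_open : sum_f_R0 (fun i => if opened i && (n <? partner i)%nat then f i else 0) n =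
    sum_f_R0 (fun i => if opened i && (S n <? partner i)%nat then f i else 0) n +
    sum_f_R0 (fun i => if opened i && (partner i =? S n)%nat then f i else 0) n) by lra.
  rewrite <- sum_plus. apply sum_eq. intros i _.
  destruct (opened i); simpl; [|ring].
  destruct (Nat.ltb_spec n (partner i)), (Nat.ltb_spec (S n) (partner i)),
    (Nat.eqb_spec (partner i) (S n)); try ring; lia.
Qed.

Lemma open_sum_minus (sel : nat -> bool) (f g : nat -> R) (m : nat) :
  open_sum sel (fun i => f i - g i) m = open_sum sel f m - open_sum sel g m.
Proof.
  unfold open_sum. rewrite <- minus_sum. apply sum_eq. intros i _.
  destruct (_ && _); ring.
Qed.

Lemma mass_pending (m : nat) : mass m = pending m + (if opened m then y m else 0).
Proof.
  unfold mass, pending, open_sum.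
  transitivity (sum_f_R0 (fun i => if opened_below m i && (m <? partner i)%nat then y i else 0) m
    + sum_f_R0 (fun i => if (i =? m)%nat && opened i then y i else 0) m).
  - rewrite <- sum_plus. apply sum_eq. intros i hi.
    rewrite opened_below_spec. destruct (Nat.eqb_spec i m) as [->|hne].
    + rewrite Nat.ltb_irrefl, (proj2 (Nat.ltb_lt _ _) (partner_gt m)).
      destruct (opened m); simpl; ring.
    + rewrite (proj2 (Nat.ltb_lt i m)) by lia. simpl. destruct (_ && _); ring.
  - rewrite (sum_f_R0_single (fun i => if (i =? m)%nat && opened i then y i else 0) m m)
      by (lia || (intros i _ hi; now rewrite (proj2 (Nat.eqb_neq i m) hi))).
    now rewrite Nat.eqb_refl.
Qed.

Lemma pending_succ (n : nat) : pending (S n) = mass n - closing_term y (S n).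
Proof.
  pose proof (mass_pending (S n)). pose proof (open_sum_succ y n).
  unfold mass in *. lra.
Qed.

Lemma mass_ge_pending (m : nat) : pending m <= mass m.
Proof.
  rewrite mass_pending. destruct (opened m); [pose proof (y_pos m)|]; lra.
Qed.

Lemma closing_term_nonneg (m : nat) : 0 <= closing_term y m.
Proof. unfold closing_term. destruct (closer m); [left; apply y_pos | lra]. Qed.

Definition rho (n : nat) : nat :=
  if opened n then partner n else match closer n with Some i => i | None => n end.

Lemma rho_involutive (n : nat) : rho (rho n) = n.
Proof.
  unfold rho. destruct (opened n) eqn:hn.
  - assert (hp : opened (partner n) = false) by (rewrite opened_eq, closer_partner; auto).
    now rewrite hp, closer_partner.
  - destruct (closer n) as [i|] eqn:hc.
    + destruct (closer_Some _ _ hc) as [hi <-]. now rewrite hi.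
    + now rewrite hn, hc.
Qed.

Lemma sum_rho_diff (m : nat) :
  sum_f_R0 (fun n => y n - y (rho n)) m = mass m - tail m.
Proof.
  unfold mass, tail. rewrite <- open_sum_minus.
  induction m as [|n IH].
  - unfold open_sum, rho. cbn [sum_f_R0].
    replace (closer 0) with (@None nat) by reflexivity.
    rewrite (proj2 (Nat.ltb_lt _ _) (partner_gt 0)). destruct (opened 0); simpl; ring.
  - rewrite tech5, IH, open_sum_succ. unfold closing_term, rho.
    destruct (opened (S n)) eqn:ho.
    + rewrite (opened_closer _ ho). ring.
    + destruct (closer (S n)) as [i|] eqn:hc; [destruct (closer_Some _ _ hc) as [_ ->]|]; ring.
Qed.

Lemma mass_nonneg (m : nat) : 0 <= mass m.
Proof.
  apply cond_pos_sum. intros i. destruct (_ && _); [left; apply y_pos | lra].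
Qed.

Lemma mass_fill (a k : nat) :
  (forall t, (a < t <= a + k)%nat -> closer t = None) ->
  mass a + (sum_f_R0 y (a + k) - sum_f_R0 y a) <= mass (a + k) \/ d <= mass (a + k).
Proof.
  induction k as [|k IH]; intros hnone.
  - left. rewrite Nat.add_0_r. lra.
  - rewrite Nat.add_succ_r, tech5.
    assert (hc : closer (S (a + k)) = None) by (apply hnone; lia).
    assert (hp : pending (S (a + k)) = mass (a + k))
      by (rewrite pending_succ; unfold closing_term; rewrite hc; ring).
    pose proof (mass_pending (S (a + k))) as hm.
    rewrite opened_eq, hc in hm.
    destruct (Rlt_dec (pending (S (a + k))) d) as [hlt|hge].
    + destruct (IH (fun t ht => hnone t ltac:(lia))) as [h|h]; [left | exfalso]; lra.
    + right. lra.
Qed.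

Lemma mass_before_partner (k : nat) : d <= mass (pred (partner (S k))).
Proof.
  set (a := partner k).
  set (k' := (pred (partner (S k)) - a)%nat).
  assert (e : pred (partner (S k)) = (a + k')%nat)
    by (pose proof (partner_succ k); unfold k', a; lia).
  pose proof (partner_gap k) as hgap. fold a in hgap. rewrite e in hgap |- *.
  destruct (mass_fill a k') as [h|h]; [|pose proof (mass_nonneg a); lra|exact h].
  intros t ht. destruct (closer t) as [i|] eqn:hc; [exfalso|reflexivity].
  destruct (closer_Some _ _ hc) as [_ <-].
  assert (h1 : (k < i)%nat) by (apply partner_lt_iff; unfold a in ht; lia).
  assert (h2 : (i < S k)%nat) by (apply partner_lt_iff; lia).
  lia.
Qed.

Lemma mass_lower (k : nat) (eps : R) (m : nat) :
  (forall i, (k < i)%nat -> y i <= eps) -> (partner (S k) <= m)%nat -> d - eps <= mass m.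
Proof.
  intros hsmall. induction m as [|n IH]; intros hm.
  - pose proof (partner_gt (S k)). lia.
  - pose proof (hsmall (S k) ltac:(lia)). pose proof (y_pos (S k)).
    apply Rle_trans with (pending (S n)); [|apply mass_ge_pending].
    rewrite pending_succ. unfold closing_term.
    destruct (closer (S n)) as [i|] eqn:hc.
    + destruct (closer_Some _ _ hc) as [_ hi].
      assert (hki : (S k <= i)%nat).
      { destruct (Nat.lt_ge_cases i (S k)) as [h|h]; [|exact h].
        apply partner_lt_iff in h. lia. }
      destruct i as [|i]; [lia|].
      replace n with (pred (partner (S i))) by lia.
      pose proof (mass_before_partner i). pose proof (hsmall (S i) ltac:(lia)). lra.
    + destruct (Nat.eq_dec (partner (S k)) (S n)) as [e|ne].
      * replace n with (pred (partner (S k))) by lia.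
        pose proof (mass_before_partner k). lra.
      * pose proof (IH ltac:(lia)). lra.
Qed.

Lemma mass_opened (m : nat) : opened m = true -> mass m < d + y m.
Proof.
  intros ho. rewrite mass_pending, ho.
  assert (pending m < d) by (rewrite opened_eq in ho; destruct (closer m);
                             [discriminate | destruct (Rlt_dec (pending m) d); easy]).
  lra.
Qed.

Lemma mass_not_opened (n : nat) : opened (S n) = false -> mass (S n) <= mass n.
Proof.
  intros ho. rewrite mass_pending, ho, pending_succ.
  pose proof (closing_term_nonneg (S n)). lra.
Qed.

Lemma mass_upper_after_opening (t : nat) (eps : R) (m : nat) :
  (forall i, (t <= i)%nat -> y i <= eps) -> opened t = true -> (t <= m)%nat ->
  mass m <= d + eps.
Proof.
  intros hsmall ht. induction m as [|n IH]; intros hm.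
  - replace t with 0%nat in * by lia.
    pose proof (mass_opened 0 ht). pose proof (hsmall 0%nat (le_n 0)). lra.
  - destruct (opened (S n)) eqn:ho.
    + pose proof (mass_opened (S n) ho). pose proof (hsmall (S n) hm). lra.
    + destruct (Nat.eq_dec t (S n)) as [->|hne]; [congruence|].
      pose proof (mass_not_opened n ho). pose proof (IH ltac:(lia)). lra.
Qed.

Lemma mass_upper (N : nat) (eps : R) (m : nat) :
  (forall i, (N <= i)%nat -> y i <= eps) -> (partner N <= m)%nat -> mass m <= d + eps.
Proof.
  intros hsmall hm.
  destruct (classic (exists t, (N <= t <= m)%nat /\ opened t = true))
    as [[t [ht ho]]|hnone].
  - apply (mass_upper_after_opening t); [intros; apply hsmall; lia | exact ho | lia].
  - assert (hzero : mass m = 0).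
    { apply sum_eq_R0. intros i hi. destruct (opened i) eqn:ho; [|reflexivity].
      destruct (Nat.ltb_spec m (partner i)) as [hmi|]; [exfalso|reflexivity].
      destruct (Nat.lt_ge_cases i N) as [hiN|hNi].
      - apply partner_lt_iff in hiN. lia.
      - apply hnone. exists i. split; [lia | exact ho]. }
    pose proof (hsmall N (le_n N)). pose proof (y_pos N). lra.
Qed.

Lemma mass_cv : Un_cv mass d.
Proof.
  intros eps heps.
  destruct (y_cv0 (eps / 2) ltac:(lra)) as [N hN].
  assert (hsmall : forall i, (N <= i)%nat -> y i <= eps / 2).
  { intros i hi. specialize (hN i hi). unfold Rdist in hN. rewrite Rminus_0_r in hN.
    apply Rabs_def2 in hN. lra. }
  exists (partner (S N)). intros m hm. unfold Rdist.
  pose proof (mass_lower N (eps / 2) m (fun i hi => hsmall i ltac:(lia)) hm).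
  pose proof (proj2 (partner_lt_iff N (S N)) (Nat.lt_succ_diag_r N)).
  pose proof (mass_upper N (eps / 2) m hsmall ltac:(lia)).
  apply Rabs_def1; lra.
Qed.

Lemma tail_cv : Un_cv tail 0.
Proof.
  intros eps heps.
  destruct (pow_lt_1_zero (/2) ltac:(rewrite Rabs_right; lra) (eps / 2) ltac:(lra)) as [K hK].
  specialize (hK K (le_n K)). rewrite Rabs_right in hK by (apply Rle_ge, pow_le; lra).
  exists (partner K). intros m hm. unfold Rdist. rewrite Rminus_0_r.
  assert (0 <= tail m).
  { apply cond_pos_sum. intros i. destruct (_ && _); [left; apply y_pos | lra]. }
  assert (tail m <= 2 * (/2) ^ K).
  { eapply Rle_trans; [|apply (sum_pow_half_from K m)]. apply sum_Rle. intros i _.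
    destruct (Nat.leb_spec K i) as [hKi|hiK].
    - pose proof (pow_le (/2) i ltac:(lra)). pose proof (partner_small i).
      destruct (_ && _); lra.
    - apply partner_lt_iff in hiK.
      rewrite (proj2 (Nat.ltb_ge m (partner i))) by lia. rewrite Bool.andb_false_r. lra. }
  rewrite Rabs_right; lra.
Qed.

Theorem involution_with_diff_sum :
  exists rho : nat -> nat,
    (forall n, rho (rho n) = n) /\ infinite_sum (fun n => y n - y (rho n)) d.
Proof.
  exists rho. split; [exact rho_involutive|].
  change (Un_cv (sum_f_R0 (fun n => y n - y (rho n))) d).
  apply (Un_cv_ext (fun m => mass m - tail m)); [intros m; now rewrite sum_rho_diff|].
  replace d with (d - 0) by ring. exact (CV_minus _ _ _ _ mass_cv tail_cv).
Qed.

End Involution.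

Theorem mainTheorem5 (x : nat -> R)
  (hpos : forall n, 0 < x n)
  (hdiv : ~ (exists l, infinite_sum x l))
  (hlim : Un_cv x 0)
  (b : R) (hb : rearr_diff_sums x b) :
  forall c, b <= c -> rearr_diff_sums x c.
Proof.
  intros c hbc. destruct hb as [s [hs hsum]].
  set (y := fun n => x (s n)).
  assert (y_cv0 : Un_cv y 0).
  { apply (Un_cv_ext (fun n => x n - (x n - x (s n)))); [intros n; unfold y; ring|].
    replace 0 with (0 - 0) by ring.
    exact (CV_minus _ _ _ _ hlim (infinite_sum_terms_cv0 _ _ hsum)). }
  assert (y_not_summable : ~ (exists l, infinite_sum y l)).
  { intros [l hl]. apply hdiv. exists (b + l).
    apply (infinite_sum_ext (fun n => (x n - x (s n)) + y n)); [intros n; unfold y; ring|].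
    exact (infinite_sum_plus _ _ _ _ hsum hl). }
  pose proof (partial_sums_unbounded y (fun n => Rlt_le _ _ (hpos (s n))) y_not_summable)
    as y_unbounded.
  destruct (involution_with_diff_sum y (c - b) (fun n => hpos (s n)) y_cv0 y_unbounded
              ltac:(lra)) as [rho [hrho hrho_sum]].
  exists (fun n => s (rho n)). split.
  - exact (is_perm_comp s rho hs (involutive_is_perm rho hrho)).
  - replace c with (b + (c - b)) by ring.
    apply (infinite_sum_ext (fun n => (x n - x (s n)) + (y n - y (rho n))));
      [intros n; unfold y; ring|].
    exact (infinite_sum_plus _ _ _ _ hsum hrho_sum).
Qed.
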